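(* Let $n\ge 2$, let $P_n$ be the path with vertices $x_1,\dots,x_n$ and edges $\{x_i,x_{i+1}\}$, let $\mathcal C$ be a maximal independent set of $P_n$ with $c:=|\mathcal C|$, and let $G$ be the $\mathcal C$-suspension of $P_n$. Let $\alpha:=\lceil n/2\rceil$, $\delta_0=0$ if $x_1\in\mathcal C$ and $1$ otherwise, $\delta_t=0$ if $x_n\in\mathcal C$ and $1$ otherwise, and $\delta:=\delta_0+\delta_t$. Then $G$ is pseudo-Gorenstein$^{*}$ if and only if one of the following holds: (a) $n\equiv 0,2,9,11\pmod{12}$ and $c+\delta\le\alpha$; (b) $n\equiv 3,5,6,8\pmod{12}$ and $c+\delta=\alpha+1$; (c) $n\equiv 1,4\pmod{12}$ and $\mathcal C=\{x_1,x_4,\dots,x_n\}$.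
   Context: For $\varnothing\ne C\subseteq V(G)$, the $C$-suspension of $G$ is obtained by adding a new vertex $z$ adjacent exactly to the vertices of $C$. For a finite simple graph $G$ on vertex set $[N]$, let $S=K[y_1,\dots,y_N]$ ($K$ a field) and $I(G)$ the edge ideal generated by $y_iy_j$, $\{i,j\}\in E(G)$. Let $\alpha(G)$ be the independence number (equal to $\dim S/I(G)$). Write the Hilbert series of $S/I(G)$ uniquely as $(h_0+\dots+h_st^s)/(1-t)^{\alpha(G)}$ with $h_s\ne 0$, and $\mathfrak a(G)=s-\alpha(G)$. $G$ is pseudo-Gorenstein$^{*}$ if $h_s=1$ and $\mathfrak a(G)=0$. *)

From mathcomp Require Import all_boot all_order all_algebra.
Set Implicit Arguments. Unset Strict Implicit. Unset Printing Implicit Defensive.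
Import GRing.Theory Num.Theory.

(* A finite simple graph is given by a vertex finType V and an (intended
   symmetric, irreflexive) edge relation e : rel V. *)

Definition independent (V : finType) (e : rel V) (A : {set V}) : bool :=
  [forall x in A, forall y in A, ~~ e x y].

Definition maximal_independent (V : finType) (e : rel V) (A : {set V}) : Prop :=
  independent e A /\ forall B : {set V}, independent e B -> A \subset B -> B = A.

Definition indep_number (V : finType) (e : rel V) : nat :=
  \max_(A : {set V} | independent e A) #|A|.

(* Path P_n on vertices 'I_n (vertex i stands for x_{i+1}). *)
Definition path_rel (n : nat) : rel 'I_n :=
  fun i j => (i.+1 == j :> nat) || (j.+1 == i :> nat).

(* C-suspension: new vertex z = None adjacent exactly to the vertices of C. *)
Definition suspension (V : finType) (e : rel V) (C : {set V}) : rel (option V) :=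
  fun u v => match u, v with
             | Some x, Some y => e x y
             | None, Some y => y \in C
             | Some x, None => x \in C
             | None, None => false
             end.

(* Hilbert function of S/I(G) in degree d: the dimension over K of the degree-d
   part, i.e. the number of degree-d monomials prod_v y_v^(m v) not in I(G),
   i.e. whose support is independent (standard monomials of a monomial ideal
   form a K-basis of the quotient). Exponents are bounded by d, hence the
   finite type 'I_d.+1. *)
Definition hilbert_fun (V : finType) (e : rel V) (d : nat) : nat :=
  #|[set m : {ffun V -> 'I_d.+1} |
      (\sum_(v : V) (m v : nat) == d)%N &&
      independent e [set v | (0 < m v)%N]]|.

(* Coefficients of the numerator h(t) = (1-t)^alpha(G) * HS(t) of the Hilbert
   series HS(t) = sum_d hilbert_fun d t^d written over (1-t)^alpha(G). *)
Definition h_coef (V : finType) (e : rel V) (d : nat) : int :=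
  (\sum_(k < d.+1)
     (-1) ^+ k * ('C(indep_number e, k))%:Z * (hilbert_fun e (d - k))%:Z)%R.

(* pseudo-Gorenstein*: h_s = 1 and a(G) = s - alpha(G) = 0, where s is the
   degree of the h-polynomial; i.e. h_alpha = 1 and h_d = 0 for d > alpha. *)
Definition pseudo_gorenstein_star (V : finType) (e : rel V) : Prop :=
  h_coef e (indep_number e) = 1%R /\
  forall d : nat, (indep_number e < d)%N -> h_coef e d = 0%R.

(* By the f-vector/h-vector identity h(t) = sum_A t^|A| (1-t)^(alpha - |A|), A ranging over
   the independent sets of G, the h-polynomial has degree at most alpha(G) and its top
   coefficient is sum_A (-1)^(alpha - |A|); so G is pseudo-Gorenstein* iff
   (-1)^alpha(G) I(G; -1) = 1, where I is the independence polynomial.  The independent sets of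
   the C-suspension are those of P_n, and z together with those of P_n - C; hence
   I(G; -1) = I(P_n; -1) - I(P_n - C; -1) and alpha(G) = max(ceil(n/2), alpha(P_n - C) + 1).
   The value I(P_n; -1) is 6-periodic in n.  As C is maximal, P_n - C is a disjoint union of
   paths on one or two vertices, which gives alpha(P_n - C) + 1 = c + delta, and
   I(P_n - C; -1) = 0 unless every component has two vertices, i.e. C = {x_1, x_4, ..., x_n}.
   The rest is arithmetic modulo 12. *)

From mathcomp Require Import all_boot all_order all_algebra.
From mathcomp Require Import zify ring.

Set Implicit Arguments. Unset Strict Implicit. Unset Printing Implicit Defensive.
Import GRing.Theory Num.Theory.

(** * The h-vector of an edge ideal *)

(* Sequences nat -> int stand for power series: backdiff multiplies by 1 - t, delay by t. *)
Section Differences.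
Local Open Scope ring_scope.
Implicit Types F G : nat -> int.

Definition backdiff F (d : nat) : int := F d - (if d is d'.+1 then F d' else 0).

Definition delay F (d : nat) : int := if d is d'.+1 then F d' else 0.

Lemma iter_backdiffE a F d :
  iter a backdiff F d = \sum_(k < d.+1) (-1) ^+ k * ('C(a, k))%:Z * F (d - k)%N.
Proof.
elim: a d => [|a IH] d /=.
  by rewrite big_ord_recl big1 => [|i _]; rewrite ?bin0n ?mulr0 ?mul0r // addr0 mul1r subn0.
case: d => [|d]; rewrite /backdiff !IH.
  by rewrite !big_ord_recl !big_ord0 /= !bin0 subr0.
rewrite [in RHS]big_ord_recl [in X in X - _]big_ord_recl /= !bin0 !subn0 -addrA.
congr (_ + _).
under [RHS]eq_bigr => i _ do rewrite binS PoszD mulrDr mulrDl.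
rewrite big_split /=; congr (_ + _).
rewrite -sumrN; apply: eq_bigr => i _.
by rewrite exprS subSS !mulN1r !mulNr.
Qed.

Lemma eq_iter_backdiff a F G : F =1 G -> iter a backdiff F =1 iter a backdiff G.
Proof. by move=> eqFG d; rewrite !iter_backdiffE; apply: eq_bigr => k _; rewrite eqFG. Qed.

Lemma iter_backdiff_delay a F : iter a backdiff (delay F) =1 delay (iter a backdiff F).
Proof.
case=> [|d]; rewrite /= iter_backdiffE; first by rewrite big_ord_recl big_ord0 mulr0 addr0.
rewrite big_ord_recr /= subnn mulr0 addr0 iter_backdiffE; apply: eq_bigr => i _.
by rewrite subSn // -ltnS.
Qed.

Lemma iter_backdiff_indicator j a d :
  iter j backdiff (fun d => (d == a)%:R) d =
  if (a <= d)%N then (-1) ^+ (d - a) * ('C(j, d - a))%:Z else 0.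
Proof.
elim: j d => [|j IH] d.
  rewrite /=; case: (ltngtP a d) => [lt_ad|//|->]; last by rewrite subnn.
  by rewrite -[(d - a)%N]prednK ?subn_gt0 // bin0n mulr0.
rewrite iterS; case: d => [|d]; rewrite /backdiff -/backdiff !IH.
  by rewrite subr0; case: a {IH} => [|a] //=; rewrite !bin0.
case: (ltngtP a d.+1) => [lt_ad|lt_da|->].
- rewrite -ltnS lt_ad subSn // binS PoszD exprS; ring.
- by rewrite leqNgt (ltn_trans _ lt_da) ?subr0.
- by rewrite ltnn subnn !bin0 subr0.
Qed.

Fixpoint ncompositions (k m : nat) : nat :=
  if k is k'.+1 then \sum_(j < m) ncompositions k' (m - j.+1) else (m == 0)%N.

Lemma backdiff_ncompositions k :
  backdiff (fun m => (ncompositions k.+1 m)%:Z) =1 delay (fun m => (ncompositions k m)%:Z).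
Proof.
case=> [|d]; rewrite /backdiff /= ?big_ord0 ?subr0 //.
by rewrite big_ord_recl /= subn1 PoszD addrK.
Qed.

(* In power series: (1 - t)^b * t^a / (1 - t)^a = t^a (1 - t)^(b - a). *)
Lemma iter_backdiff_ncompositions a b d : (a <= b)%N ->
  iter b backdiff (fun m => (ncompositions a m)%:Z) d =
  if (a <= d)%N then (-1) ^+ (d - a) * ('C(b - a, d - a))%:Z else 0.
Proof.
move=> le_ab; rewrite -iter_backdiff_indicator -{1}(subnK le_ab) iterD.
apply: eq_iter_backdiff => {}d; elim: a d {le_ab} => [|a IH] d.
  by rewrite /=; case: (d == 0)%N.
rewrite iterSr (eq_iter_backdiff _ (backdiff_ncompositions a)) iter_backdiff_delay.
by case: d => [|d] //; apply: IH.
Qed.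

End Differences.

Section MonomialCount.
Variable V : finType.
Implicit Types (A B : {set V}) (N m : nat).

Definition supp N (f : {ffun V -> 'I_N}) : {set V} := [set v | (0 < f v)%N].

Definition monomials N A m : {set {ffun V -> 'I_N}} :=
  [set f : {ffun V -> 'I_N} | (\sum_v (f v : nat) == m) && (supp f == A)].

Definition nmonomials N A m : nat := #|monomials N A m|.

Definition upd N (f : {ffun V -> 'I_N}) (x : V) (j : 'I_N) : {ffun V -> 'I_N} :=
  [ffun v => if v == x then j else f v].

Lemma sum_upd N (f : {ffun V -> 'I_N}) x j :
  (\sum_v (upd f x j v : nat) = j + \sum_(v | v != x) (f v : nat))%N.
Proof.
rewrite (bigD1 x) //= ffunE eqxx; congr (_ + _).
by apply: eq_bigr => v /negbTE xNv; rewrite ffunE xNv.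
Qed.

Lemma supp_upd N (f : {ffun V -> 'I_N}) x j :
  supp (upd f x j) = if (0 < j)%N then x |: supp f else supp f :\ x.
Proof.
apply/setP => v; rewrite !(fun_if (fun A => v \in A)) !inE ffunE.
by case: (v =P x) => [->|_]; case: (0 < j)%N.
Qed.

Lemma updK N (f : {ffun V -> 'I_N}) x j : upd (upd f x j) x (f x) = f.
Proof. by apply/ffunP => v; rewrite !ffunE; case: eqP => [->|]. Qed.

Lemma nmonomials_set0 N m : (0 < N)%N -> nmonomials N set0 m = (m == 0)%N.
Proof.
move=> N_gt0; pose f0 : {ffun V -> 'I_N} := [ffun => Ordinal N_gt0].
have supp0 f : (supp f == set0) = (f == f0).
  apply/eqP/eqP => [/setP suppf0|->]; last by apply/setP => v; rewrite !inE ffunE.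
  apply/ffunP => v; apply: val_inj; move: (suppf0 v); rewrite !inE ffunE /=.
  by case: (nat_of_ord (f v)).
have sum_f0 : (\sum_v (f0 v : nat) = 0)%N by rewrite big1 // => v _; rewrite ffunE.
rewrite /nmonomials /monomials (_ : [set f | _] = if (m == 0)%N then [set f0] else set0).
  by case: (m == 0)%N; rewrite ?cards1 ?cards0.
apply/setP => f; rewrite inE supp0.
rewrite (fun_if (fun S : {set {ffun V -> 'I_N}} => f \in S)) in_set1 in_set0.
case: (f =P f0) => [->|_]; last by rewrite andbF; case: ifP.
by rewrite sum_f0 andbT eq_sym; case: ifP.
Qed.

Lemma card_monomials_at N B x m (j : 'I_N) : x \notin B ->
  #|[set f in monomials N (x |: B) m | f x == j]| =
  if (0 < j <= m)%N then nmonomials N B (m - j) else 0.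
Proof.
move=> xNB; case: ifP => [/andP[j_gt0 le_jm]|j_out]; last first.
  apply: eq_card0 => f; rewrite /monomials !inE.
  apply/negP => /andP[/andP[/eqP sumf /eqP suppf] /eqP fxj].
  have : x \in supp f by rewrite suppf setU11.
  rewrite inE fxj => j_gt0.
  by move: j_out; rewrite j_gt0 -fxj -sumf (bigD1 x) //= leq_addr.
pose z : 'I_N := Ordinal (leq_ltn_trans (leq0n j) (ltn_ord j)).
pose T := monomials N B (m - j).
have gx0 g : g \in T -> g x = z.
  rewrite inE => /andP[_ /eqP suppg]; apply: val_inj => /=; apply/eqP; rewrite -leqn0 leqNgt.
  by apply: contra xNB; rewrite -suppg inE.
have upd_inj : {in T &, injective (fun g => upd g x j)}.
  move=> g1 g2 /gx0 g1x /gx0 g2x /ffunP eq_upd; apply/ffunP => v.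
  case: (v =P x) => [->|/eqP vNx]; first by rewrite g1x g2x.
  by move: (eq_upd v); rewrite !ffunE (negbTE vNx).
rewrite /nmonomials -/T -(card_in_imset upd_inj); apply: eq_card => f.
rewrite /monomials !inE.
apply/idP/imsetP => [/andP[/andP[/eqP sumf /eqP suppf] /eqP fxj]|[g Tg ->]].
  exists (upd f x z); last by rewrite -fxj updK.
  rewrite inE supp_upd /= suppf setU1K // eqxx andbT sum_upd /= add0n.
  by move: sumf; rewrite (bigD1 x) //= fxj => <-; rewrite addKn.
move: (Tg); rewrite inE => /andP[/eqP sumg /eqP suppg].
rewrite supp_upd j_gt0 suppg sum_upd !ffunE !eqxx !andbT.
by move: sumg; rewrite (bigD1 x) //= gx0 // add0n => ->; rewrite subnKC.
Qed.

Lemma nmonomialsU1 N B x m : (m < N)%N -> x \notin B ->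
  nmonomials N (x |: B) m = (\sum_(j < m) nmonomials N B (m - j.+1))%N.
Proof.
case: N => [//|N] ltmN xNB.
rewrite {1}/nmonomials -sum1_card (partition_big (fun f : {ffun V -> 'I_N.+1} => f x) predT) //=.
under eq_bigr => j _ do rewrite sum1dep_card card_monomials_at //.
rewrite big_ord_recl /= add0n.
rewrite (big_ord_widen_cond N predT (fun j => nmonomials N.+1 B (m - j.+1))) //.
by rewrite [RHS]big_mkcond; apply: eq_bigr => i _; rewrite /bump add1n.
Qed.

Lemma nmonomialsE N A m : (m < N)%N -> nmonomials N A m = ncompositions #|A| m.
Proof.
move cardA: #|A| => k; elim: k A m cardA => [|k IH] A m cardA ltmN.
  move/eqP: cardA; rewrite cards_eq0 => /eqP ->.
  by rewrite nmonomials_set0 // (leq_ltn_trans _ ltmN).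
have [x Ax] : exists x, x \in A by apply/card_gt0P; rewrite cardA.
rewrite -(setD1K Ax) nmonomialsU1 ?setD11 //; apply: eq_bigr => j _.
rewrite IH ?(leq_ltn_trans (leq_subr _ _) ltmN) //.
by move: cardA; rewrite (cardsD1 x) Ax => [[]].
Qed.

Lemma hilbert_funE (e : rel V) m :
  hilbert_fun e m = (\sum_(A | independent e A) ncompositions #|A| m)%N.
Proof.
rewrite /hilbert_fun -sum1_card.
rewrite (partition_big (@supp m.+1) (independent e)) /=; last by move=> f; rewrite inE => /andP[].
apply: eq_bigr => A indA; rewrite -(@nmonomialsE m.+1) // /nmonomials /monomials -sum1_card.
apply: eq_bigl => f; rewrite !inE.
case: (supp f =P A) => [suppf|_]; rewrite ?andbF // -/(supp f) suppf !andbT.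
by apply: andb_idr.
Qed.

End MonomialCount.

Section HVector.
Local Open Scope ring_scope.
Variables (V : finType) (e : rel V).

Lemma indep_number_max (A : {set V}) : independent e A -> (#|A| <= indep_number e)%N.
Proof. exact: leq_bigmax_cond. Qed.

Lemma h_coefE d : h_coef e d =
  \sum_(A | independent e A)
    if (#|A| <= d)%N then (-1) ^+ (d - #|A|) * ('C(indep_number e - #|A|, d - #|A|))%:Z
    else 0.
Proof.
rewrite /h_coef.
under eq_bigr => k _ do rewrite hilbert_funE (big_morph Posz PoszD (erefl _)) mulr_sumr.
rewrite exchange_big; apply: eq_bigr => A indA.
by rewrite -iter_backdiff_ncompositions ?indep_number_max // iter_backdiffE.
Qed.

Lemma pseudo_gorenstein_starE : pseudo_gorenstein_star e <->
  \sum_(A | independent e A) (-1) ^+ (indep_number e - #|A|) = 1 :> int.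
Proof.
have h_top : h_coef e (indep_number e) =
    \sum_(A | independent e A) (-1) ^+ (indep_number e - #|A|).
  by rewrite h_coefE; apply: eq_bigr => A /indep_number_max ->; rewrite binn mulr1.
rewrite /pseudo_gorenstein_star h_top; split=> [[]//|sum1]; split=> // d ltad.
rewrite h_coefE big1 // => A /indep_number_max leA; case: ifP => // _.
by rewrite bin_small ?mulr0 // ltn_sub2r // (leq_ltn_trans leA).
Qed.

End HVector.

(** * Suspensions *)

Lemma independentP (V : finType) (e : rel V) (A : {set V}) :
  reflect {in A &, forall x y, ~~ e x y} (independent e A).
Proof.
apply: (iffP forall_inP) => [indA x y Ax Ay | indA x Ax].
  exact: forall_inP (indA x Ax) y Ay.
by apply/forall_inP => y; apply: indA.
Qed.

Section Suspension.
Variables (V : finType) (e : rel V) (C : {set V}).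
Local Notation G := (suspension e C).

Lemma independent_imset_Some (B : {set V}) : independent G (Some @: B) = independent e B.
Proof.
apply/independentP/independentP => indB x y.
  by move=> Bx By; apply: (indB (Some x) (Some y)); apply: imset_f.
by move=> /imsetP[x' Bx' ->] /imsetP[y' By' ->]; apply: indB.
Qed.

Lemma independent_setU1_None (B : {set V}) :
  independent G (None |: Some @: B) = independent e B && (B \subset ~: C).
Proof.
apply/independentP/andP => [indB | [/independentP indB /subsetP BnC] x y].
  split; first by apply/independentP => x y Bx By; apply: (indB (Some x) (Some y));
    rewrite !inE imset_f ?orbT.
  apply/subsetP => x Bx; rewrite inE.
  by apply: (indB None (Some x)); rewrite !inE ?eqxx ?imset_f ?orbT.
rewrite !inE => /predU1P[->|/imsetP[x' Bx' ->]] /predU1P[->|/imsetP[y' By' ->]] //=.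
- by move: (BnC _ By'); rewrite inE.
- by move: (BnC _ Bx'); rewrite inE.
- exact: indB.
Qed.

Lemma big_independent_suspension (R : Type) (idx : R) (op : Monoid.com_law idx) (F : nat -> R) :
  \big[op/idx]_(A | independent G A) F #|A| =
  op (\big[op/idx]_(B | independent e B) F #|B|)
     (\big[op/idx]_(B | independent e B && (B \subset ~: C)) F #|B|.+1).
Proof.
have NoneNSome (B : {set V}) : None \notin Some @: B by apply/imsetP => -[].
have preim_Some (B : {set V}) : Some @^-1: (Some @: B) = B.
  by apply/setP => x; rewrite inE mem_imset //; apply: Some_inj.
have preim_NoneSome (B : {set V}) : Some @^-1: (None |: Some @: B) = B.
  by apply/setP => x; rewrite !inE mem_imset //; apply: Some_inj.
rewrite (bigID (fun A : {set option V} => None \in A)) /= Monoid.mulmC; congr (op _ _).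
- rewrite (reindex_onto (fun B : {set V} => Some @: B) (fun A => Some @^-1: A)); last first.
    move=> A /andP[_ NoneNA]; apply/setP => -[x|].
      by rewrite mem_imset ?inE //; apply: Some_inj.
    by rewrite (negbTE NoneNA) (negbTE (NoneNSome _)).
  apply: eq_big => B; first by rewrite independent_imset_Some NoneNSome preim_Some eqxx !andbT.
  by rewrite card_imset //; apply: Some_inj.
- rewrite (reindex_onto (fun B : {set V} => None |: Some @: B) (fun A => Some @^-1: A));
    last first.
    move=> A /andP[_ NoneA]; apply/setP => -[x|]; last by rewrite NoneA setU11.
    by rewrite !inE mem_imset ?inE //; apply: Some_inj.
  apply: eq_big => B.
    by rewrite independent_setU1_None setU11 preim_NoneSome eqxx !andbT.
  by rewrite cardsU1 NoneNSome card_imset //; apply: Some_inj.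
Qed.

Lemma indep_number_suspension : indep_number G =
  maxn (indep_number e) (\max_(B | independent e B && (B \subset ~: C)) #|B|.+1).
Proof. exact: (big_independent_suspension maxn id). Qed.

End Suspension.

(** * Independent sets of paths *)

Definition spaced (s : bitseq) : bool := sorted (fun a b => ~~ (a && b)) s.

Lemma spaced_false s : spaced (false :: s) = spaced s.
Proof. by case: s. Qed.

Lemma spaced_true s : spaced (true :: s) = ~~ head false s && spaced s.
Proof. by case: s. Qed.

Fixpoint bitseqs n : seq bitseq :=
  if n is n'.+1 then [seq false :: s | s <- bitseqs n'] ++ [seq true :: s | s <- bitseqs n']
  else [:: [::]].

Lemma mem_map_cons (x y : bool) (s : bitseq) L :
  (x :: s \in [seq y :: t | t <- L]) = (x == y) && (s \in L).
Proof.
apply/mapP/andP => [[t Lt [-> ->]]|[/eqP -> Ls]]; first by rewrite eqxx.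
by exists s.
Qed.

Lemma mem_bitseqs n s : (s \in bitseqs n) = (size s == n).
Proof.
elim: n s => [|n IH] [|x s] //=; rewrite mem_cat.
  by apply/negP => /orP[] /mapP[].
by rewrite !mem_map_cons IH eqSS; case: x; rewrite ?orbF.
Qed.

Lemma bitseqs_uniq n : uniq (bitseqs n).
Proof.
elim: n => [|n IH] //=; rewrite cat_uniq !map_inj_uniq ?IH //=; try by move=> ? ? [].
by rewrite andbT; apply/hasPn => _ /mapP[s _ ->]; rewrite mem_map_cons.
Qed.

Lemma bitseqsS n :
  bitseqs n.+1 = [seq false :: s | s <- bitseqs n] ++ [seq true :: s | s <- bitseqs n].
Proof. by []. Qed.

Section SpacedBig.
Variables (R : Type) (idx : R) (op : Monoid.com_law idx).
Implicit Types (m : bitseq) (g : nat -> R).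

Definition big_spaced m g : R :=
  \big[op/idx]_(b <- bitseqs (size m) | spaced b && all2 implb b m) g (count id b).

Lemma big_spaced_nil g : big_spaced [::] g = g 0%N.
Proof. by rewrite /big_spaced /= big_cons big_nil /= Monoid.mulm1. Qed.

Lemma big_spaced_false m g : big_spaced (false :: m) g = big_spaced m g.
Proof.
rewrite /big_spaced bitseqsS big_cat !big_map -[RHS](Monoid.mulm1 op); congr (op _ _).
  by apply: eq_big => [s|s _]; rewrite ?spaced_false ?add0n.
by rewrite big_pred0 // => s; rewrite /= andbF.
Qed.

Lemma big_spaced_true m g :
  big_spaced (true :: m) g = op (big_spaced m g) (big_spaced (behead m) (fun k => g k.+1)).
Proof.
rewrite /big_spaced bitseqsS big_cat !big_map; congr (op _ _).
  by apply: eq_big => [s|s _]; rewrite ?spaced_false ?add0n.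
case: m => [|y m]; first by rewrite /= !big_cons !big_nil.
rewrite bitseqsS big_cat !big_map -[RHS](Monoid.mulm1 op); congr (op _ _).
  by apply: eq_big => [s|s _]; rewrite ?spaced_true ?spaced_false ?add1n.
by rewrite big_pred0 // => s; rewrite spaced_true.
Qed.

End SpacedBig.

Lemma bigmax_succ (T : Type) (r : seq T) (P : pred T) (f : T -> nat) :
  has P r -> \max_(x <- r | P x) (f x).+1 = (\max_(x <- r | P x) f x).+1.
Proof.
elim: r => [|x r IH] //= hasP; rewrite !big_cons.
have [hasPr|hasNPr] := boolP (has P r).
  by rewrite IH //; case: (P x) => //; rewrite -maxnSS.
move: hasP; rewrite (negbTE hasNPr) orbF => ->.
by rewrite !big_hasC // !maxn0.
Qed.

Lemma has_spaced_sub m : has (fun b => spaced b && all2 implb b m) (bitseqs (size m)).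
Proof.
apply/hasP; exists (nseq (size m) false); first by rewrite mem_bitseqs size_nseq.
rewrite /spaced; apply/andP; split; last by elim: m => //= x m ->.
by apply/(sortedP false) => i _; rewrite !nth_nseq; case: ifP.
Qed.

Section SpacedCount.
Local Open Scope ring_scope.
Implicit Types m : bitseq.

Definition indep_sign m : int := big_spaced +%R m (fun k => (-1) ^+ k).

Definition indep_max m : nat := big_spaced maxn m id.

Lemma indep_sign_nil : indep_sign [::] = 1.
Proof. exact: big_spaced_nil. Qed.

Lemma indep_sign_false m : indep_sign (false :: m) = indep_sign m.
Proof. exact: big_spaced_false. Qed.

Lemma indep_sign_true m : indep_sign (true :: m) = indep_sign m - indep_sign (behead m).
Proof.
rewrite /indep_sign big_spaced_true /big_spaced -sumrN; congr (_ + _).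
by apply: eq_bigr => b _; rewrite exprS mulN1r.
Qed.

Lemma indep_max_nil : indep_max [::] = 0%N.
Proof. exact: big_spaced_nil. Qed.

Lemma indep_max_false m : indep_max (false :: m) = indep_max m.
Proof. exact: big_spaced_false. Qed.

Lemma indep_max_true m : indep_max (true :: m) = maxn (indep_max m) (indep_max (behead m)).+1.
Proof. by rewrite /indep_max big_spaced_true /big_spaced bigmax_succ // has_spaced_sub. Qed.

Lemma indep_sign_cat m1 m2 : indep_sign (m1 ++ false :: m2) = indep_sign m1 * indep_sign m2.
Proof.
elim: {m1}(size m1).+1 {-2}m1 (ltnSn (size m1)) => // k IH [|[] m1] /= lt_m1k.
- by rewrite indep_sign_false indep_sign_nil mul1r.
- rewrite !indep_sign_true IH //; case: m1 lt_m1k => [|y m1] /= lt_m1k.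
    by rewrite !indep_sign_nil mul1r !subrr mul0r.
  by rewrite IH ?mulrBl // -ltnS ltnW.
- by rewrite !indep_sign_false IH.
Qed.

Lemma indep_max_cat m1 m2 : indep_max (m1 ++ false :: m2) = (indep_max m1 + indep_max m2)%N.
Proof.
elim: {m1}(size m1).+1 {-2}m1 (ltnSn (size m1)) => // k IH [|[] m1] /= lt_m1k.
- by rewrite indep_max_false indep_max_nil.
- rewrite !indep_max_true IH //; case: m1 lt_m1k => [|y m1] /= lt_m1k.
    by rewrite !indep_max_nil add0n (maxn_idPr (leqnSn _)).
  rewrite IH; last by rewrite -ltnS ltnW.
  by rewrite -addSn addn_maxl.
- by rewrite !indep_max_false IH.
Qed.

End SpacedCount.

Section PathBitseq.
Variable n : nat.
Implicit Types A B D : {set 'I_n}.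

Definition bitseq_of A : bitseq := [seq i \in A | i <- enum 'I_n].

Lemma size_bitseq_of A : size (bitseq_of A) = n.
Proof. by rewrite size_map size_enum_ord. Qed.

Lemma nth_bitseq_of A (i : 'I_n) : nth false (bitseq_of A) i = (i \in A).
Proof. by rewrite (nth_map i) ?size_enum_ord // nth_ord_enum. Qed.

Lemma count_bitseq_of A : count id (bitseq_of A) = #|A|.
Proof. by rewrite /bitseq_of enumT count_map cardE /enum_mem size_filter; apply: eq_count. Qed.

Lemma bitseq_of_inj : injective bitseq_of.
Proof. by move=> A B eqAB; apply/setP => i; rewrite -!nth_bitseq_of eqAB. Qed.

Lemma bitseq_ofK (b : bitseq) : size b = n -> bitseq_of [set i : 'I_n | nth false b i] = b.
Proof.
move=> sizeb; apply: (@eq_from_nth _ false); rewrite ?size_bitseq_of // => i lt_in.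
by rewrite (nth_bitseq_of _ (Ordinal lt_in)) inE.
Qed.

Lemma all2_implb_bitseq_of A D : all2 implb (bitseq_of A) (bitseq_of D) = (A \subset D).
Proof.
rewrite /bitseq_of; apply/idP/subsetP => [subAD i|subAD].
  have : i \in enum 'I_n by rewrite mem_enum.
  elim: (enum 'I_n) subAD => [|j s IH] //= /andP[/implyP ijAD subAD].
  by rewrite inE => /predU1P[->|]; [apply: ijAD | apply: IH].
by elim: (enum 'I_n) => [|j s IH] //=; rewrite IH andbT; apply/implyP/subAD.
Qed.

Lemma spaced_bitseq_of A : spaced (bitseq_of A) = independent (@path_rel n) A.
Proof.
apply/(sortedP false)/independentP => [spA x y Ax Ay | indA i].
  apply/negP; rewrite /path_rel => /orP[] /eqP eq_xy.
    by have := spA x; rewrite size_bitseq_of eq_xy ltn_ord !nth_bitseq_of Ax Ay => /(_ isT).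
  by have := spA y; rewrite size_bitseq_of eq_xy ltn_ord !nth_bitseq_of Ax Ay => /(_ isT).
rewrite size_bitseq_of => lt_i1n; have lt_in := ltnW lt_i1n.
rewrite (nth_bitseq_of _ (Ordinal lt_in)) (nth_bitseq_of _ (Ordinal lt_i1n)).
by apply/negP => /andP[iA i1A]; move: (indA _ _ iA i1A); rewrite /path_rel /= eqxx.
Qed.

Lemma big_independent_path (R : Type) (idx : R) (op : Monoid.com_law idx) D (g : nat -> R) :
  \big[op/idx]_(B | independent (@path_rel n) B && (B \subset D)) g #|B| =
  big_spaced op (bitseq_of D) g.
Proof.
rewrite /big_spaced size_bitseq_of.
transitivity (\big[op/idx]_(b <- map bitseq_of (index_enum {set 'I_n})
                | spaced b && all2 implb b (bitseq_of D)) g (count id b)).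
  rewrite big_map; apply: eq_big => B.
    by rewrite spaced_bitseq_of all2_implb_bitseq_of.
  by rewrite count_bitseq_of.
apply: perm_big; apply: uniq_perm.
- by rewrite map_inj_uniq ?index_enum_uniq //; apply: bitseq_of_inj.
- exact: bitseqs_uniq.
move=> b; rewrite mem_bitseqs; apply/mapP/eqP => [[A _ ->]|sizeb].
  exact: size_bitseq_of.
by exists [set i : 'I_n | nth false b i]; rewrite ?mem_index_enum // bitseq_ofK.
Qed.

Lemma bitseq_ofT : bitseq_of [set: 'I_n] = nseq n true.
Proof.
apply: (@eq_from_nth _ false); rewrite ?size_bitseq_of ?size_nseq // => i lt_in.
by rewrite (nth_bitseq_of _ (Ordinal lt_in)) nth_nseq lt_in inE.
Qed.

Lemma bitseq_ofC A : bitseq_of (~: A) = map negb (bitseq_of A).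
Proof. by rewrite /bitseq_of -map_comp; apply: eq_map => i /=; rewrite inE. Qed.

End PathBitseq.

Section PathValues.
Local Open Scope ring_scope.

Definition path_sign (n : nat) : int := nth 0 [:: 1; 0; -1; -1; 0; 1] (n %% 6).

Lemma path_signSS n : path_sign n.+2 = path_sign n.+1 - path_sign n.
Proof.
have mod6S m : (m.+1 %% 6 = (m %% 6).+1 %% 6)%N by rewrite -addn1 -modnDml addn1.
rewrite /path_sign (mod6S n.+1) (mod6S n).
by case: (n %% 6)%N (ltn_pmod n (isT : (0 < 6)%N)) => [|[|[|[|[|[|]]]]]].
Qed.

Lemma indep_sign_nseq n : indep_sign (nseq n true) = path_sign n.
Proof.
suff : indep_sign (nseq n true) = path_sign n /\ indep_sign (nseq n.+1 true) = path_sign n.+1.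
  by case.
elim: n => [|n [IH1 IH2]]; first by rewrite /= indep_sign_true !indep_sign_nil subrr.
by split=> //; rewrite path_signSS -IH1 -IH2 [nseq _ _]/= indep_sign_true.
Qed.

Lemma indep_max_nseq n : indep_max (nseq n true) = uphalf n.
Proof.
suff : indep_max (nseq n true) = uphalf n /\ indep_max (nseq n.+1 true) = uphalf n.+1.
  by case.
elim: n => [|n [IH1 IH2]]; first by rewrite /= indep_max_true !indep_max_nil.
by split=> //; rewrite [nseq _ _]/= indep_max_true /= IH1 IH2 maxnE /=; lia.
Qed.

End PathValues.

(** * Maximal independent sets of paths *)

Lemma maximal_independent_neighbor (V : finType) (e : rel V) (C : {set V}) (x : V) :
  irreflexive e -> maximal_independent e C -> x \notin C -> exists2 y, y \in C & e x y || e y x.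
Proof.
move=> irr_e [indC maxC] xNC.
have [/exists_inP[y Cy exy]|noadj] := boolP [exists y in C, e x y || e y x]; first by exists y.
case/negP: xNC; rewrite -(maxC (x |: C)) ?setU11 ?subsetUr //.
apply/independentP => u v; rewrite !inE => /predU1P[->|Cu] /predU1P[->|Cv].
- by rewrite irr_e.
- by apply: contra noadj => exv; apply/exists_inP; exists v; rewrite ?exv.
- by apply: contra noadj => eux; apply/exists_inP; exists u; rewrite ?eux ?orbT.
- by move/independentP: indC; apply.
Qed.

Lemma path_rel_irr n : irreflexive (@path_rel n).
Proof. by move=> i; rewrite /path_rel orbb gtn_eqF. Qed.

Definition dominating (w : bitseq) : Prop :=
  forall i, (i < size w)%N ->
  [|| nth false w i, (0 < i)%N && nth false w i.-1 | nth false w i.+1].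

Lemma maximal_path_dominating n (C : {set 'I_n}) :
  maximal_independent (@path_rel n) C -> dominating (bitseq_of C).
Proof.
move=> maxC i; rewrite size_bitseq_of => lt_in; rewrite (nth_bitseq_of _ (Ordinal lt_in)).
have [//|iNC] := boolP (Ordinal lt_in \in C).
have [y Cy adj] := maximal_independent_neighbor (@path_rel_irr n) maxC iNC.
have {adj} : (i.+1 == y) || (y.+1 == i).
  by move: adj; rewrite /path_rel /=; case: (i.+1 == y); case: (y.+1 == i).
case/orP => /eqP eq_iy; first by rewrite eq_iy (nth_bitseq_of _ y) Cy !orbT.
by rewrite -eq_iy /= (nth_bitseq_of _ y) Cy.
Qed.

Inductive gap_tail : bitseq -> Prop :=
| GapNil : gap_tail [::]
| GapEnd : gap_tail [:: false]
| Gap1 r of gap_tail r : gap_tail [:: false, true & r]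
| Gap2 r of gap_tail r : gap_tail [:: false, false, true & r].

Lemma gap_tail_of r : spaced (true :: r) -> dominating (true :: r) -> gap_tail r.
Proof.
elim: {r}(size r).+1 {-2}r (ltnSn (size r)) => // k IH [|[] r] lt_rk spr dom.
- exact: GapNil.
- by rewrite spaced_true in spr.
case: r lt_rk spr dom => [|[] r] lt_rk spr dom; first exact: GapEnd.
  rewrite spaced_true spaced_false in spr; apply/Gap1/IH => //; first by rewrite -ltnS ltnW.
  by case=> [//|i] lt_i; apply: (dom i.+3).
case: r lt_rk spr dom => [|[] r] lt_rk spr dom; first by have := dom 2%N isT.
  rewrite !spaced_true !spaced_false in spr; apply/Gap2/IH => //.
    by rewrite -ltnS (ltn_trans _ lt_rk).
  by case=> [//|i] lt_i; apply: (dom i.+4).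
by have := dom 2%N isT.
Qed.

Definition blocks2 k : bitseq := flatten (nseq k [:: false; false; true]).

Lemma blocks2S k : blocks2 k.+1 = [:: false, false, true & blocks2 k].
Proof. by []. Qed.

Section GapTail.
Local Open Scope ring_scope.

Lemma indep_max_gap_tail r : gap_tail r ->
  indep_max (map negb r) = (count id r + ~~ last true r)%N.
Proof.
elim=> {r} [||r _ IH|r _ IH]; first exact: indep_max_nil.
- by rewrite /= indep_max_true !indep_max_nil.
- rewrite -[map _ _]/([:: true] ++ false :: map negb r) indep_max_cat IH.
  by rewrite indep_max_true !indep_max_nil.
- rewrite -[map _ _]/([:: true; true] ++ false :: map negb r) indep_max_cat IH.
  by rewrite !indep_max_true !indep_max_nil.
Qed.

Lemma gap_tail_bound r : gap_tail r -> (2 * (count id r + ~~ last true r) <= size r + 1)%N.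
Proof. by elim=> {r} [||r _|r _] //=; case: (last true r) => /=; lia. Qed.

Lemma indep_sign_gap_tail r : gap_tail r ->
  indep_sign (map negb r) = if r == blocks2 (size r %/ 3) then (-1) ^+ (size r %/ 3) else 0.
Proof.
elim=> {r} [||r _ IH|r _ IH]; first exact: indep_sign_nil.
- by rewrite /= indep_sign_true !indep_sign_nil subrr.
- rewrite -[map _ _]/([:: true] ++ false :: map negb r) indep_sign_cat /=.
  rewrite indep_sign_true !indep_sign_nil subrr mul0r.
  by case: ((size r).+2 %/ 3)%N.
- rewrite -[map _ _]/([:: true; true] ++ false :: map negb r) indep_sign_cat IH /=.
  rewrite !indep_sign_true !indep_sign_nil subrr sub0r.
  rewrite (_ : (size r).+3 %/ 3 = (size r %/ 3).+1)%N; last by lia.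
  rewrite blocks2S !eqseq_cons /= exprS.
  by case: (r == _); rewrite ?mulr0 // mulN1r mulNr mul1r.
Qed.

End GapTail.

Definition gap_shape (w : bitseq) : Prop :=
  exists2 r, gap_tail r & w = true :: r \/ w = false :: true :: r.

(* For the indicator w of C, this is the c + delta of the statement. *)
Definition count_delta (w : bitseq) : nat := count id w + ~~ head false w + ~~ last false w.

Lemma gap_shape_of w : spaced w -> dominating w -> (0 < size w)%N -> gap_shape w.
Proof.
case: w => [//|[] w] spw dom _.
  by exists w; [apply: gap_tail_of | left].
case: w spw dom => [|[] w] spw dom; try by have := dom 0%N isT.
exists w; last by right.
apply: gap_tail_of; first by rewrite spaced_false in spw.
by case=> [//|i] lt_i; apply: (dom i.+2).
Qed.

Lemma gap_shape_indep_max w : gap_shape w -> (indep_max (map negb w)).+1 = count_delta w.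
Proof.
case=> r gr [->|->]; rewrite /count_delta /=.
  by rewrite indep_max_false indep_max_gap_tail // addn0 add1n.
rewrite -[true :: _]/([:: true] ++ false :: map negb r) indep_max_cat indep_max_gap_tail //.
by rewrite indep_max_true !indep_max_nil /= addn1 add1n.
Qed.

Lemma gap_shape_bound w : gap_shape w -> (count_delta w <= (uphalf (size w)).+1)%N.
Proof.
case=> r /gap_tail_bound; rewrite /count_delta => bound [->|->] /=;
  move: bound; case: (last true r) => /=; lia.
Qed.

Lemma size_blocks2 k : size (blocks2 k) = (3 * k)%N.
Proof. by elim: k => //= k; rewrite -/(blocks2 k) => ->; lia. Qed.

Lemma count_delta_blocks2 k : count_delta (true :: blocks2 k) = k.+1.
Proof.
have [count_k last_k] : count id (blocks2 k) = k /\ last true (blocks2 k).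
  by elim: k => //= k [-> ->].
by rewrite /count_delta /= count_k last_k !addn0 add1n.
Qed.

Section GapSign.
Local Open Scope ring_scope.

Lemma gap_tail_blocks2 k : gap_tail (blocks2 k).
Proof. by elim: k => [|k]; [apply: GapNil | apply: Gap2]. Qed.

Lemma indep_sign_blocks2 k : indep_sign (map negb (true :: blocks2 k)) = (-1) ^+ k.
Proof.
rewrite /= indep_sign_false (indep_sign_gap_tail (gap_tail_blocks2 k)).
by rewrite size_blocks2 mulKn // eqxx.
Qed.

Lemma gap_shape_indep_sign w : gap_shape w -> (forall k, w != true :: blocks2 k) ->
  indep_sign (map negb w) = 0.
Proof.
case=> r gr [->|->] not_blocks2 /=.
  rewrite indep_sign_false indep_sign_gap_tail //; case: eqP => // r_blocks2.
  by move: (not_blocks2 (size r %/ 3)%N); rewrite -r_blocks2 eqxx.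
rewrite -[true :: _]/([:: true] ++ false :: map negb r) indep_sign_cat.
by rewrite indep_sign_true !indep_sign_nil subrr mul0r.
Qed.

End GapSign.

Definition every_third n : bitseq := mkseq (fun i => i %% 3 == 0)%N n.

Lemma every_third_blocks2 k : every_third (3 * k + 1) = true :: blocks2 k.
Proof.
suff shift j : [seq (i %% 3 == 0)%N | i <- iota (3 * j) (3 * k + 1)] = true :: blocks2 k.
  by rewrite -(shift 0%N) muln0.
elim: k j => [|k IH] j; first by rewrite muln0 /= modnMr.
rewrite (_ : 3 * k.+1 + 1 = (3 * k + 1).+3)%N; last by lia.
have mod3 r : ((3 * j + r) %% 3 == 0)%N = (r %% 3 == 0)%N by rewrite -modnDml modnMr.
rewrite [iota _ _]/= -[(3 * j).+3]addn3 -[(3 * j).+2]addn2 -[(3 * j).+1]addn1 /= !mod3 modnMr.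
by rewrite -mulnSr IH.
Qed.

Section Arithmetic.
Local Open Scope ring_scope.

Lemma path_sign_condition n (b : bool) :
  ((-1) ^+ (uphalf n + b) * path_sign n == 1) =
  if b then (n %% 12 \in [:: 3; 5; 6; 8])%N else (n %% 12 \in [:: 0; 2; 9; 11])%N.
Proof.
have -> : (uphalf n + b = uphalf (n %% 12) + b + 2 * (3 * (n %/ 12)))%N by lia.
have -> : path_sign n = path_sign (n %% 12) by rewrite /path_sign; congr nth; lia.
rewrite exprD exprM sqrrN !expr1n mulr1.
by case: b; case: (n %% 12)%N (ltn_pmod n (isT : (0 < 12)%N)) => r; do 12?case: r => [//|r].
Qed.

Lemma every_third_condition k :
  (-1) ^+ uphalf (3 * k + 1) * (path_sign (3 * k + 1) - (-1) ^+ k) = 1 <->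
  ((3 * k + 1) %% 12 \in [:: 1; 4])%N.
Proof.
have -> : path_sign (3 * k + 1) = 0.
  by rewrite /path_sign; have [->|->] : ((3 * k + 1) %% 6 = 1 \/ (3 * k + 1) %% 6 = 4)%N by lia.
rewrite sub0r mulrN -exprD -signr_odd !inE.
have -> : odd (uphalf (3 * k + 1) + k) = ((3 * k + 1) %% 12 == 1)%N || ((3 * k + 1) %% 12 == 4)%N.
  by apply/idP/idP; lia.
by case: (_ || _); split => //= /eqP.
Qed.

End Arithmetic.

(** * Suspended paths *)

Section SuspendedPath.
Variables (n : nat) (C : {set 'I_n}).
Local Notation w := (map negb (bitseq_of C)).

Lemma big_independent_path_all (R : Type) (idx : R) (op : Monoid.com_law idx) (g : nat -> R) :
  \big[op/idx]_(B | independent (@path_rel n) B) g #|B| = big_spaced op (nseq n true) g.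
Proof.
rewrite -bitseq_ofT -big_independent_path.
by apply: eq_bigl => B; rewrite subsetT andbT.
Qed.

Lemma indep_number_suspension_path :
  indep_number (suspension (@path_rel n) C) = maxn (uphalf n) (indep_max w).+1.
Proof.
rewrite indep_number_suspension /indep_number (big_independent_path_all maxn id).
rewrite -/(indep_max _) indep_max_nseq.
rewrite (big_independent_path maxn (~: C) succn) bitseq_ofC /big_spaced bigmax_succ //.
exact: has_spaced_sub.
Qed.

Local Open Scope ring_scope.

Lemma pseudo_gorenstein_star_suspension_path :
  pseudo_gorenstein_star (suspension (@path_rel n) C) <->
  (-1) ^+ maxn (uphalf n) (indep_max w).+1 * (path_sign n - indep_sign w) = 1.
Proof.
rewrite pseudo_gorenstein_starE -indep_number_suspension_path.
set a := indep_number _.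
rewrite (eq_bigr (fun A : {set option 'I_n} => (-1) ^+ a * (-1) ^+ #|A|)); last first.
  by move=> A /indep_number_max le_Aa; rewrite -signr_odd oddB // signr_addb !signr_odd.
rewrite -mulr_sumr.
rewrite (big_independent_suspension _ _ (+%R : Monoid.com_law (0 : int)) (fun k => (-1) ^+ k)).
rewrite big_independent_path_all -/(indep_sign _) indep_sign_nseq.
rewrite (big_independent_path _ (~: C) (fun k => (-1) ^+ k.+1)) bitseq_ofC.
rewrite /big_spaced -sumrN.
by under eq_bigr => b _ do rewrite exprS mulN1r.
Qed.

End SuspendedPath.

Section Conditions.
Local Open Scope ring_scope.

Lemma blocks2_condition k (w := true :: blocks2 k) :
  (-1) ^+ maxn (uphalf (size w)) (count_delta w) *
    (path_sign (size w) - indep_sign (map negb w)) = 1 <->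
  [\/ (size w %% 12 \in [:: 0; 2; 9; 11])%N /\ (count_delta w <= uphalf (size w))%N,
      (size w %% 12 \in [:: 3; 5; 6; 8])%N /\ count_delta w = (uphalf (size w)).+1
    | (size w %% 12 \in [:: 1; 4])%N /\ w = every_third (size w)].
Proof.
rewrite {}/w count_delta_blocks2 indep_sign_blocks2 [size _]/= size_blocks2 -addn1.
rewrite every_third_blocks2 (maxn_idPl _); last by lia.
rewrite every_third_condition; split=> [mod_k|]; first by constructor 3.
by case=> -[mod_k _] //; move: mod_k; rewrite !inE; lia.
Qed.

Lemma gap_shape_condition w : gap_shape w -> (2 <= size w)%N ->
  (-1) ^+ maxn (uphalf (size w)) (indep_max (map negb w)).+1 *
    (path_sign (size w) - indep_sign (map negb w)) = 1 <->
  [\/ (size w %% 12 \in [:: 0; 2; 9; 11])%N /\ (count_delta w <= uphalf (size w))%N,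
      (size w %% 12 \in [:: 3; 5; 6; 8])%N /\ count_delta w = (uphalf (size w)).+1
    | (size w %% 12 \in [:: 1; 4])%N /\ w = every_third (size w)].
Proof.
move=> shape_w n_ge2; rewrite gap_shape_indep_max //.
have [w_blocks2|not_blocks2] := eqVneq w (true :: blocks2 (size w %/ 3)).
  by move: (size w %/ 3)%N w_blocks2 => k ->; apply: blocks2_condition.
have not_every_third : ~ ((size w %% 12 \in [:: 1; 4])%N /\ w = every_third (size w)).
  case; rewrite !inE => mod_w w_third.
  have n3 : size w = (3 * (size w %/ 3) + 1)%N by lia.
  move: not_blocks2; set k := (size w %/ 3)%N in n3 *.
  by rewrite {1}w_third n3 every_third_blocks2 eqxx.
rewrite (gap_shape_indep_sign shape_w) ?subr0 => [|k]; last first.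
  apply: contraNneq not_blocks2 => ->; rewrite [size _]/= size_blocks2.
  by rewrite (_ : (3 * k).+1 %/ 3 = k)%N //; lia.
have [s_le|s_gt] := leqP (count_delta w) (uphalf (size w)).
  have := path_sign_condition (size w) false; rewrite addn0 => cond.
  split=> [/eqP|[[mod_w _]|[_ s_eq]|//]]; first by rewrite cond => mod_w; constructor 1.
    by apply/eqP; rewrite cond.
  by move: s_le; rewrite s_eq ltnn.
have s_eq : count_delta w = (uphalf (size w)).+1.
  by apply/eqP; rewrite eqn_leq s_gt gap_shape_bound.
have := path_sign_condition (size w) true; rewrite /= addn1 s_eq => cond.
split=> [/eqP|[[_ //]|[mod_w _]|//]]; first by rewrite cond => mod_w; constructor 2.
by apply/eqP; rewrite cond.
Qed.

End Conditions.

Section MaximalPath.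
Variables (n : nat) (C : {set 'I_n}).

Lemma exists_in_bitseq_of k : [exists i in C, (i : nat) == k] = nth false (bitseq_of C) k.
Proof.
have [lt_kn|le_nk] := ltnP k n.
  rewrite (nth_bitseq_of _ (Ordinal lt_kn)); apply/exists_inP/idP => [[i Ci /eqP eq_ik]|Ck].
    by rewrite (_ : Ordinal lt_kn = i) //; apply: val_inj.
  by exists (Ordinal lt_kn).
rewrite nth_default ?size_bitseq_of //; apply/exists_inP => -[i _ /eqP eq_ik].
by move: (ltn_ord i); rewrite eq_ik ltnNge le_nk.
Qed.

Lemma bitseq_of_every_third : bitseq_of [set i : 'I_n | (i %% 3 == 0)%N] = every_third n.
Proof.
apply: (@eq_from_nth _ false); rewrite ?size_bitseq_of ?size_mkseq // => i lt_in.
by rewrite (nth_bitseq_of _ (Ordinal lt_in)) nth_mkseq // inE.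
Qed.

Lemma maximal_gap_shape : maximal_independent (@path_rel n) C -> (0 < n)%N ->
  gap_shape (bitseq_of C).
Proof.
move=> maxC n_gt0; apply: gap_shape_of; rewrite ?size_bitseq_of //.
  by rewrite spaced_bitseq_of; case: maxC.
exact: maximal_path_dominating.
Qed.

End MaximalPath.

Theorem corollary7p4 (n : nat) (C : {set 'I_n}) :
  (2 <= n)%N ->
  maximal_independent (@path_rel n) C ->
  let c := #|C| in
  let alpha := uphalf n in
  let delta0 := if [exists i in C, (i : nat) == 0%N] then 0%N else 1%N in
  let deltat := if [exists i in C, (i : nat) == n.-1] then 0%N else 1%N in
  let delta := (delta0 + deltat)%N in
  pseudo_gorenstein_star (suspension (@path_rel n) C) <->
  [\/ (n %% 12 \in [:: 0; 2; 9; 11])%N /\ (c + delta <= alpha)%N,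
      (n %% 12 \in [:: 3; 5; 6; 8])%N /\ (c + delta = alpha.+1)%N
    | (n %% 12 \in [:: 1; 4])%N /\ C = [set i : 'I_n | (i %% 3 == 0)%N]].
Proof.
move=> n_ge2 maxC c alpha delta0 deltat delta.
have shape_C := maximal_gap_shape maxC (ltnW n_ge2).
have count_deltaE : count_delta (bitseq_of C) = (c + delta)%N.
  rewrite /delta /delta0 /deltat !exists_in_bitseq_of nth0 -[n in n.-1](size_bitseq_of C) nth_last.
  by rewrite /count_delta count_bitseq_of -addnA; case: (head _ _); case: (last _ _).
rewrite pseudo_gorenstein_star_suspension_path.
move: (gap_shape_condition shape_C); rewrite size_bitseq_of count_deltaE -bitseq_of_every_third.
move=> /(_ n_ge2) ->.
split=> -[| |[mod_n eqC]]; try by [constructor 1 | constructor 2].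
  by constructor 3; rewrite (bitseq_of_inj eqC).
by constructor 3; rewrite eqC.
Qed.
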